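(* Let $\mathcal{R}_{\rm SW}$ be the family of all south-west quadrants. For $k=2$ and any $m \geq 2$, we do not have hitting $2$-cliques with respect to $\mathcal{R}_{\rm SW}$; that is, there exists a finite point set $V \subset \mathbb{R}^2$ such that for every collection of pairwise disjoint $2$-element subsets of $V$ some hyperedge of $\mathcal{H}(V,\mathcal{R}_{\rm SW},m)$ contains none of these subsets.
   Context: $\mathcal{R}_{\rm SW} = \{\{(x,y) : x \leq a,\ y \leq b\} : a,b \in \mathbb{R}\}$. For a finite $V \subset \mathbb{R}^2$, $\mathcal{H}(V,\mathcal{R},m)$ is the hypergraph on $V$ whose hyperedges are the sets $V \cap R$, $R \in \mathcal{R}$, of size exactly $m$. For fixed $k,m,\mathcal{R}$ we say we have hitting $k$-cliques if for every finite $V \subset \mathbb{R}^2$ there exist pairwise disjoint $k$-element subsets of $V$ such that every hyperedge of $\mathcal{H}(V,\mathcal{R},m)$ fully contains at least one of them. *)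

From Stdlib Require Import Reals List.
Import ListNotations.
Open Scope R_scope.

Definition point := (R * R)%type.

Definition in_SW (a b : R) (p : point) : Prop := fst p <= a /\ snd p <= b.

(* A finite point set V is given as a duplicate-free list.
   The set V ∩ R for R = SW(a,b) has exactly m elements iff the number of
   points of V in the quadrant is m.  *)
Definition SW_count (V : list point) (a b : R) : nat :=
  length (filter (fun p => if Rle_dec (fst p) a then
                             if Rle_dec (snd p) b then true else false
                           else false) V).

Definition is_SW_hyperedge (V : list point) (m : nat) (a b : R) : Prop :=
  SW_count V a b = m.

Definition two_subset_of (V : list point) (pq : point * point) : Prop :=
  In (fst pq) V /\ In (snd pq) V /\ fst pq <> snd pq.

Definition same_pair (s t : point * point) : Prop :=
  (fst s = fst t /\ snd s = snd t) \/ (fst s = snd t /\ snd s = fst t).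

Definition disjoint_pairs (s t : point * point) : Prop :=
  fst s <> fst t /\ fst s <> snd t /\ snd s <> fst t /\ snd s <> snd t.

(* A collection of pairwise disjoint 2-element subsets of V, listed by C:
   any two listed subsets are either the same set or disjoint. *)
Definition disjoint_two_subsets (V : list point) (C : list (point * point)) : Prop :=
  (forall s, In s C -> two_subset_of V s) /\
  (forall s t, In s C -> In t C -> same_pair s t \/ disjoint_pairs s t).

(* The point set V_n is built recursively: V_0 is the origin, and V_(n+1) is
   the origin together with two translates of V_n, one above-left and one
   below-right, both in the open north-east quadrant of the origin and
   incomparable with each other.  By induction, for every matching of V_n
   some south-west quadrant holds exactly n+1 points of V_n and no matched
   pair.  In V_(n+1) the origin is matched into at most one of the two
   copies; take the quadrant given by induction in the other copy and widen
   it to reach the origin.  It still misses the first copy entirely, so it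
   gains exactly one point and no matched pair. *)
From Stdlib Require Import Reals List Lra Lia Bool Permutation FinFun Classical.
Import ListNotations.
Open Scope R_scope.

Definition sw_test (a b : R) (p : point) : bool :=
  if Rle_dec (fst p) a then if Rle_dec (snd p) b then true else false else false.

Lemma SW_count_filter V a b : SW_count V a b = length (filter (sw_test a b) V).
Proof. reflexivity. Qed.

Lemma sw_test_spec a b p : sw_test a b p = true <-> in_SW a b p.
Proof.
  unfold sw_test, in_SW.
  destruct (Rle_dec (fst p) a), (Rle_dec (snd p) b); intuition (discriminate || lra).
Qed.

Lemma SW_count_cons_in a b p V :
  in_SW a b p -> SW_count (p :: V) a b = S (SW_count V a b).
Proof. rewrite !SW_count_filter, <- sw_test_spec; simpl; intros ->; reflexivity. Qed.

Lemma SW_count_app V W a b :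
  SW_count (V ++ W) a b = (SW_count V a b + SW_count W a b)%nat.
Proof. rewrite !SW_count_filter, filter_app, length_app; reflexivity. Qed.

Lemma SW_count_perm V W a b : Permutation V W -> SW_count V a b = SW_count W a b.
Proof.
  rewrite !SW_count_filter; intros HVW; apply Permutation_length.
  induction HVW as [| x V W _ IH | x y V | V W U _ IHVW _ IHWU]; simpl.
  - constructor.
  - destruct (sw_test a b x); [apply perm_skip|]; exact IH.
  - destruct (sw_test a b x), (sw_test a b y); try constructor; apply Permutation_refl.
  - exact (perm_trans IHVW IHWU).
Qed.

Lemma SW_count_outside V a b :
  (forall p, In p V -> ~ in_SW a b p) -> SW_count V a b = 0%nat.
Proof.
  intros Hout; rewrite SW_count_filter, (filter_ext_in _ (fun _ => false)).
  - rewrite filter_false; reflexivity.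
  - intros p Hp; apply not_true_is_false; rewrite sw_test_spec; exact (Hout p Hp).
Qed.

Definition translate (u v : R) (p : point) : point := (fst p + u, snd p + v).

Lemma translate_inj u v : Injective (translate u v).
Proof.
  intros [x y] [x' y']; unfold translate; simpl; intros [= Hx Hy]; f_equal; lra.
Qed.

Lemma in_SW_translate u v a b p :
  in_SW (a + u) (b + v) (translate u v p) <-> in_SW a b p.
Proof. unfold in_SW, translate; simpl; lra. Qed.

Lemma SW_count_translate u v a b V :
  SW_count (map (translate u v) V) (a + u) (b + v) = SW_count V a b.
Proof.
  rewrite !SW_count_filter, filter_map_swap, length_map; f_equal.
  apply filter_ext; intros p; apply eq_true_iff_eq.
  rewrite !sw_test_spec; apply in_SW_translate.
Qed.

Record matching (P : point -> point -> Prop) : Prop := {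
  matching_sym : forall p q, P p q -> P q p;
  matching_irrefl : forall p, ~ P p p;
  matching_functional : forall p q r, P p q -> P p r -> q = r }.

Lemma matching_comp P f :
  Injective f -> matching P -> matching (fun p q => P (f p) (f q)).
Proof.
  intros Hf [Hsym Hirr Hfun]; split.
  - intros p q; apply Hsym.
  - intros p; apply Hirr.
  - intros p q r Hq Hr; exact (Hf _ _ (Hfun _ _ _ Hq Hr)).
Qed.

Definition pairs_of (C : list (point * point)) (p q : point) : Prop :=
  In (p, q) C \/ In (q, p) C.

Lemma pairs_of_matching V C : disjoint_two_subsets V C -> matching (pairs_of C).
Proof.
  intros [Hsub Hdisj]; split.
  - intros p q [H | H]; [right | left]; exact H.
  - intros p [H | H]; exact (proj2 (proj2 (Hsub _ H)) eq_refl).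
  - intros p q r [Hq | Hq] [Hr | Hr];
      destruct (Hdisj _ _ Hq Hr) as [Hsame | Hd];
      unfold same_pair, disjoint_pairs in *; simpl in *; intuition congruence.
Qed.

Definition avoids (P : point -> point -> Prop) (V : list point) (a b : R) : Prop :=
  forall p q, In p V -> In q V -> in_SW a b p -> in_SW a b q -> ~ P p q.

Definition origin : point := (0, 0).

Lemma extend_quadrant P V W u v u' v' a b :
  matching P ->
  Permutation (origin :: map (translate u v) V ++ map (translate u' v') V) W ->
  in_SW (a + u) (b + v) origin ->
  (forall q, In q V -> ~ in_SW (a + u) (b + v) (translate u' v' q)) ->
  (forall q, In q V -> ~ P origin (translate u v q)) ->
  avoids (fun p q => P (translate u v p) (translate u v q)) V a b ->
  SW_count W (a + u) (b + v) = S (SW_count V a b) /\ avoids P W (a + u) (b + v).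
Proof.
  intros HP HW Horigin Hout Hfree Hav.
  assert (Hcases : forall p, In p W -> in_SW (a + u) (b + v) p ->
            p = origin \/ exists q, In q V /\ in_SW a b q /\ p = translate u v q).
  { intros p Hp Hin.
    apply (Permutation_in _ (Permutation_sym HW)) in Hp.
    simpl in Hp; rewrite in_app_iff, !in_map_iff in Hp.
    destruct Hp as [<- | [[q [<- Hq]] | [q [<- Hq]]]].
    - left; reflexivity.
    - right; exists q; rewrite in_SW_translate in Hin; auto.
    - exfalso; exact (Hout q Hq Hin). }
  split.
  - rewrite <- (SW_count_perm _ _ _ _ HW), SW_count_cons_in by exact Horigin.
    rewrite SW_count_app, SW_count_translate, (SW_count_outside (map _ V)).
    + rewrite Nat.add_0_r; reflexivity.
    + intros p Hp; apply in_map_iff in Hp; destruct Hp as [q [<- Hq]]; exact (Hout q Hq).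
  - intros p q Hp Hq Hinp Hinq HPpq.
    destruct (Hcases p Hp Hinp) as [-> | (p' & Hp' & Hinp' & ->)],
             (Hcases q Hq Hinq) as [-> | (q' & Hq' & Hinq' & ->)].
    + exact (matching_irrefl _ HP _ HPpq).
    + exact (Hfree q' Hq' HPpq).
    + exact (Hfree p' Hp' (matching_sym _ HP _ _ HPpq)).
    + exact (Hav p' q' Hp' Hq' Hinp' Hinq' HPpq).
Qed.

Fixpoint side (n : nat) : R :=
  match n with O => 0 | S k => 2 * side k + 2 end.

Fixpoint tree_points (n : nat) : list point :=
  match n with
  | O => [origin]
  | S k => origin :: map (translate 1 (side k + 2)) (tree_points k)
                    ++ map (translate (side k + 2) 1) (tree_points k)
  end.

Lemma side_nonneg n : 0 <= side n.
Proof. induction n; simpl; lra. Qed.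

Lemma tree_points_bounds n p :
  In p (tree_points n) -> 0 <= fst p <= side n /\ 0 <= snd p <= side n.
Proof.
  revert p; induction n as [|n IH]; intros p Hp; simpl in Hp.
  - destruct Hp as [<- | []]; simpl; lra.
  - pose proof (side_nonneg n); simpl.
    rewrite in_app_iff, !in_map_iff in Hp.
    destruct Hp as [<- | [[q [<- Hq]] | [q [<- Hq]]]]; [simpl; lra | |];
      apply IH in Hq; unfold translate; simpl; lra.
Qed.

Lemma tree_copies_disjoint n p q :
  In p (tree_points n) -> In q (tree_points n) ->
  translate 1 (side n + 2) p <> translate (side n + 2) 1 q.
Proof.
  intros Hp Hq E; apply tree_points_bounds in Hp, Hq.
  unfold translate in E; injection E; lra.
Qed.

Lemma tree_points_NoDup n : NoDup (tree_points n).
Proof.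
  induction n as [|n IH]; simpl.
  - repeat constructor; simpl; tauto.
  - constructor.
    + rewrite in_app_iff, !in_map_iff.
      intros [[q [E Hq]] | [q [E Hq]]]; apply tree_points_bounds in Hq;
        pose proof (side_nonneg n); unfold translate, origin in E; injection E; lra.
    + apply NoDup_app; try (apply Injective_map_NoDup; [apply translate_inj | exact IH]).
      intros p Hp1 Hp2; apply in_map_iff in Hp1, Hp2.
      destruct Hp1 as [q1 [<- Hq1]], Hp2 as [q2 [E Hq2]].
      exact (tree_copies_disjoint n q1 q2 Hq1 Hq2 (eq_sym E)).
Qed.

Lemma tree_points_quadrant n P : matching P ->
  exists a b, 0 <= a <= side n /\ 0 <= b <= side n /\
    SW_count (tree_points n) a b = S n /\ avoids P (tree_points n) a b.
Proof.
  revert P; induction n as [|n IH]; intros P HP.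
  - exists 0, 0; simpl; repeat split; try lra.
    + rewrite SW_count_cons_in by (unfold in_SW; simpl; lra); reflexivity.
    + intros p q [<- | []] [<- | []] _ _; apply (matching_irrefl _ HP).
  - pose proof (side_nonneg n) as HL.
    pose proof (tree_points_bounds n) as Hbounds.
    destruct (classic (exists q, In q (tree_points n) /\
                                 P origin (translate 1 (side n + 2) q)))
      as [(q0 & Hq0 & HPq0) | Hfree].
    + destruct (IH _ (matching_comp P _ (translate_inj (side n + 2) 1) HP))
        as (a & b & Ha & Hb & Hcount & Hav).
      destruct (extend_quadrant P (tree_points n) (tree_points (S n))
                  (side n + 2) 1 1 (side n + 2) a b) as [Hcount' Hav']; [exact HP | | | | | exact Hav |].
      * simpl; apply perm_skip, Permutation_app_comm.
      * unfold in_SW; simpl; lra.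
      * intros q Hq [_ Hy]; apply Hbounds in Hq; simpl in Hy; lra.
      * intros q Hq HPq.
        exact (tree_copies_disjoint n q0 q Hq0 Hq
                 (matching_functional _ HP _ _ _ HPq0 HPq)).
      * exists (a + (side n + 2)), (b + 1); simpl side.
        rewrite Hcount', Hcount; repeat split; auto; lra.
    + destruct (IH _ (matching_comp P _ (translate_inj 1 (side n + 2)) HP))
        as (a & b & Ha & Hb & Hcount & Hav).
      destruct (extend_quadrant P (tree_points n) (tree_points (S n))
                  1 (side n + 2) (side n + 2) 1 a b) as [Hcount' Hav']; [exact HP | | | | | exact Hav |].
      * apply Permutation_refl.
      * unfold in_SW; simpl; lra.
      * intros q Hq [Hx _]; apply Hbounds in Hq; simpl in Hx; lra.
      * intros q Hq HPq; apply Hfree; exists q; auto.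
      * exists (a + 1), (b + (side n + 2)); simpl side.
        rewrite Hcount', Hcount; repeat split; auto; lra.
Qed.

Theorem corollary5 : forall m : nat, (2 <= m)%nat ->
  exists V : list point, NoDup V /\
    forall C : list (point * point), disjoint_two_subsets V C ->
      exists a b : R, is_SW_hyperedge V m a b /\
        forall s, In s C -> ~ (in_SW a b (fst s) /\ in_SW a b (snd s)).
Proof.
  intros m Hm; destruct m as [|n]; [lia|].
  exists (tree_points n); split; [apply tree_points_NoDup|].
  intros C HC.
  destruct (tree_points_quadrant n (pairs_of C) (pairs_of_matching _ _ HC))
    as (a & b & _ & _ & Hcount & Hav).
  exists a, b; split; [exact Hcount|].
  intros s Hs [Hin1 Hin2]; destruct (proj1 HC s Hs) as (H1 & H2 & _).
  apply (Hav _ _ H1 H2 Hin1 Hin2); left; rewrite <- surjective_pairing; exact Hs.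
Qed.
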